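(* Let $0<m\le L$, $\kappa=L/m$, let $\rho\in(0,1)$ satisfy $1/(1-\rho)\in[\sqrt{3\kappa+1}/2,(\kappa+1)/2]$, let $c\in[0,1/2]$ be the solution of $\kappa(1-\rho)\big(1-c\rho-c^2(1+\rho)\big)=(1+\rho)\big(1-c\rho-c^2(1-\rho)\big)$, and consider the two-step momentum algorithm with parameters $\alpha=(1+\rho)(1+c-c\rho)/(L(1+c))$, $\gamma=\beta=c\rho^2/\big((\alpha L-1)(1+c)\big)$. Then the extreme values of $\hat J$ over $[m,L]$ satisfy $$\hat J_{\max}=\hat J(m)=\frac{\sigma_w^2(1-c)^2(r\kappa+1)}{2(1-c-c\rho^2)(1+\rho)(1-c+c\rho)}\;\ge\;\hat J(L)=\frac{\sigma_w^2(1+c)^2(1+c-c\rho^2)}{(1-\rho^2)(1+c-c\rho)(1+c+c\rho)(1+c+c\rho^2)},$$ and $\hat J_{\min}=\hat J(1/\alpha)=\sigma_w^2$, where $r=\dfrac{(1+c)(1-c+c\rho)}{(1-c)(1+c-c\rho)}\in[1,3]$.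
   Context: For the two-step momentum algorithm $x^{t+2}=x^{t+1}+\beta(x^{t+1}-x^t)-\alpha\nabla f\big(x^{t+1}+\gamma(x^{t+1}-x^t)\big)+\sigma_w w^t$ applied to quadratics with Hessian eigenvalues in $[m,L]$ (white noise $w^t$ with zero mean and identity covariance, $\sigma_w\ge0$), define for $\lambda>0$: $a(\lambda)=\beta-\gamma\alpha\lambda$, $b(\lambda)=(1+\gamma)\alpha\lambda-(1+\beta)$, $d(\lambda)=a+b+1$, $l(\lambda)=a-b+1$, $h(\lambda)=1-a$, and $\hat J(\lambda)=\sigma_w^2(d(\lambda)+l(\lambda))/(2d(\lambda)h(\lambda)l(\lambda))$ (the contribution of Hessian eigenvalue $\lambda$ to the steady-state variance of $x^t-x^\star$). $\hat J_{\max}=\max_{\lambda\in[m,L]}\hat J(\lambda)$, $\hat J_{\min}=\min_{\lambda\in[m,L]}\hat J(\lambda)$. *)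

From Stdlib Require Import Reals.
Open Scope R_scope.

(* Coefficients of the characteristic polynomial of the two-step momentum
   algorithm restricted to the Hessian eigenvalue lam. *)
Definition a_coef (alpha beta gamma lam : R) : R := beta - gamma * alpha * lam.
Definition b_coef (alpha beta gamma lam : R) : R :=
  (1 + gamma) * alpha * lam - (1 + beta).
Definition d_coef (alpha beta gamma lam : R) : R :=
  a_coef alpha beta gamma lam + b_coef alpha beta gamma lam + 1.
Definition l_coef (alpha beta gamma lam : R) : R :=
  a_coef alpha beta gamma lam - b_coef alpha beta gamma lam + 1.
Definition h_coef (alpha beta gamma lam : R) : R :=
  1 - a_coef alpha beta gamma lam.

Definition Jhat (alpha beta gamma sigma_w lam : R) : R :=
  sigma_w ^ 2 * (d_coef alpha beta gamma lam + l_coef alpha beta gamma lam)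
  / (2 * d_coef alpha beta gamma lam * h_coef alpha beta gamma lam
       * l_coef alpha beta gamma lam).

From Stdlib Require Import Reals Lra Psatz.
Open Scope R_scope.

(* With gamma = beta = b and u = alpha lam - 1 the coefficients become d = 1 + u,
   h = 1 + b u and l = 1 - (1 + 2b) u, and d + l = 2 (1 - b u), so
   Jhat(lam) = sigma_w^2 Jnorm b u.  On -1 < u < 1 / (1 + 2b), Jnorm b u factors as
     1 / (1 - 2 b^2 u^2 / (1 - b u)) * 1 / (1 - (1 + 2b) u^2 / (1 - 2 b u)),
   and u^2 / (1 - s u) grows as u moves away from 0 on either side.  Hence
   Jnorm b u >= Jnorm b 0 = 1, and on an interval Jnorm is largest at an endpoint.
   The tuning gives beta = c rho / (1 - c rho) and sends lam = m, L to
   u = - rho (1 - c rho) / (1 - c) <= 0 and u = rho (1 - c rho) / (1 + c) >= 0; after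
   clearing denominators the value at m exceeds the value at L by
   (1 - rho^2) 4 c rho^2 (1 - c^2 - c^2 rho^2 (1 + c^2 - c^2 rho^2)), which is
   nonnegative for c <= 1/2. *)

Lemma Rdiv_le_cross a p b q : 0 < p -> 0 < q -> a * q <= b * p -> a / p <= b / q.
Proof.
  intros Hp Hq H.
  replace (a / p) with (a * q * / (p * q)) by (field; lra).
  replace (b / q) with (b * p * / (p * q)) by (field; lra).
  apply Rmult_le_compat_r; [left; apply Rinv_0_lt_compat; nra | exact H].
Qed.

Definition Jnorm (b u : R) : R :=
  (1 - b * u) / ((1 + u) * (1 + b * u) * (1 - (1 + 2 * b) * u)).

Lemma Jhat_eq_Jnorm alpha b sigma_w lam :
  Jhat alpha b b sigma_w lam = sigma_w ^ 2 * Jnorm b (alpha * lam - 1).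
Proof.
  unfold Jhat, Jnorm, d_coef, l_coef, h_coef, a_coef, b_coef, Rdiv.
  set (u := alpha * lam - 1).
  set (D := (1 + u) * (1 + b * u) * (1 - (1 + 2 * b) * u)).
  replace (2 * _ * _ * _) with (2 * D) by (unfold D, u; ring).
  rewrite Rinv_mult.
  (* Both sides divide by the same D. *)
  set (iD := / D).
  unfold u; field.
Qed.

Definition between0 (x y : R) : Prop := 0 <= x <= y \/ y <= x <= 0.

Lemma between0_0 y : between0 0 y.
Proof. unfold between0; lra. Qed.

Lemma sqr_div_affine_le s x y :
  0 < 1 - s * x -> 0 < 1 - s * y -> between0 x y ->
  x ^ 2 / (1 - s * x) <= y ^ 2 / (1 - s * y).
Proof.
  intros Hx Hy Hxy.
  apply Rdiv_le_cross; [exact Hx | exact Hy |].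
  assert (0 <= (y - x) * (x * (1 - s * y) + y)).
  { destruct Hxy as [Hxy | Hxy].
    - apply Rmult_le_pos; [lra |].
      assert (0 <= x * (1 - s * y)) by (apply Rmult_le_pos; lra). lra.
    - replace ((y - x) * (x * (1 - s * y) + y))
        with ((x - y) * (- x * (1 - s * y) - y)) by ring.
      apply Rmult_le_pos; [lra |].
      assert (0 <= - x * (1 - s * y)) by (apply Rmult_le_pos; lra). lra. }
  nra.
Qed.

Definition Jfactor (t s u : R) : R := / (1 - t * (u ^ 2 / (1 - s * u))).

Lemma Jfactor_le t s x y :
  0 <= t -> 0 < 1 - s * x -> 0 < 1 - s * y -> between0 x y ->
  0 < 1 - t * (y ^ 2 / (1 - s * y)) -> Jfactor t s x <= Jfactor t s y.
Proof.
  intros Ht Hx Hy Hxy Hpos.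
  pose proof (sqr_div_affine_le s x y Hx Hy Hxy).
  apply Rinv_le_contravar; [exact Hpos |].
  enough (t * (x ^ 2 / (1 - s * x)) <= t * (y ^ 2 / (1 - s * y))) by lra.
  now apply Rmult_le_compat_l.
Qed.

Lemma Jfactor_den_pos t s u :
  0 < 1 - s * u -> 0 < 1 - s * u - t * u ^ 2 -> 0 < 1 - t * (u ^ 2 / (1 - s * u)).
Proof.
  intros Hu Hden.
  replace (1 - t * (u ^ 2 / (1 - s * u))) with ((1 - s * u - t * u ^ 2) / (1 - s * u))
    by (field; lra).
  now apply Rdiv_lt_0_compat.
Qed.

Lemma Jfactor_0 t s : Jfactor t s 0 = 1.
Proof.
  unfold Jfactor. replace (1 - t * (0 ^ 2 / (1 - s * 0))) with 1 by field.
  apply Rinv_1.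
Qed.

Lemma Jfactor_ge1 t s u :
  0 <= t -> 0 < 1 - s * u -> 0 < 1 - t * (u ^ 2 / (1 - s * u)) -> 1 <= Jfactor t s u.
Proof.
  intros Ht Hu Hpos. rewrite <- (Jfactor_0 t s).
  apply Jfactor_le; try lra. apply between0_0.
Qed.

Section Jnorm_shape.

Context (b : R) (Hb : 0 <= b < 1).

Lemma Jnorm_domain_pos u : -1 < u -> (1 + 2 * b) * u < 1 ->
  0 < 1 - b * u /\ 0 < 1 - 2 * b * u /\
  0 < 1 - b * u - 2 * b ^ 2 * u ^ 2 /\ 0 < 1 - 2 * b * u - (1 + 2 * b) * u ^ 2.
Proof.
  intros Hu Hku.
  assert (0 < 1 + b * u) by nra.
  assert (0 < 1 - 2 * b * u) by nra.
  split; [nra |]. split; [lra |]. split.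
  - replace (1 - b * u - 2 * b ^ 2 * u ^ 2) with ((1 + b * u) * (1 - 2 * b * u)) by ring.
    now apply Rmult_lt_0_compat.
  - replace (1 - 2 * b * u - (1 + 2 * b) * u ^ 2) with ((1 + u) * (1 - (1 + 2 * b) * u))
      by ring.
    apply Rmult_lt_0_compat; lra.
Qed.

Lemma Jnorm_factor u : -1 < u -> (1 + 2 * b) * u < 1 ->
  Jnorm b u = Jfactor (2 * b ^ 2) b u * Jfactor (1 + 2 * b) (2 * b) u.
Proof.
  intros Hu Hku.
  destruct (Jnorm_domain_pos u Hu Hku) as (H1 & H2 & H3 & H4).
  unfold Jnorm, Jfactor. field. repeat split; nra.
Qed.

Lemma Jnorm_le x y : -1 < y -> (1 + 2 * b) * y < 1 -> between0 x y ->
  Jnorm b x <= Jnorm b y.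
Proof.
  intros Hy Hky Hxy.
  assert (Hx : -1 < x /\ (1 + 2 * b) * x < 1) by (destruct Hxy; split; nra).
  destruct Hx as [Hx Hkx].
  destruct (Jnorm_domain_pos x Hx Hkx) as (Hx1 & Hx2 & Hx3 & Hx4).
  destruct (Jnorm_domain_pos y Hy Hky) as (Hy1 & Hy2 & Hy3 & Hy4).
  assert (0 <= 2 * b ^ 2 /\ 0 <= 1 + 2 * b) as [Ht1 Ht2] by nra.
  assert (Hle1 : Jfactor (2 * b ^ 2) b x <= Jfactor (2 * b ^ 2) b y)
    by (apply Jfactor_le; try apply Jfactor_den_pos; assumption).
  assert (Hle2 : Jfactor (1 + 2 * b) (2 * b) x <= Jfactor (1 + 2 * b) (2 * b) y)
    by (apply Jfactor_le; try apply Jfactor_den_pos; assumption).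
  assert (1 <= Jfactor (2 * b ^ 2) b x)
    by (apply Jfactor_ge1; try apply Jfactor_den_pos; assumption).
  assert (1 <= Jfactor (1 + 2 * b) (2 * b) x)
    by (apply Jfactor_ge1; try apply Jfactor_den_pos; assumption).
  rewrite (Jnorm_factor x), (Jnorm_factor y) by assumption.
  apply Rmult_le_compat; lra.
Qed.

Lemma Jnorm_0 : Jnorm b 0 = 1.
Proof. unfold Jnorm. field. Qed.

Lemma Jnorm_ge1 u : -1 < u -> (1 + 2 * b) * u < 1 -> 1 <= Jnorm b u.
Proof.
  intros Hu Hku. rewrite <- Jnorm_0.
  apply Jnorm_le; [exact Hu | exact Hku | apply between0_0].
Qed.

Lemma Jnorm_le_Rmax u0 u1 u : -1 < u0 -> (1 + 2 * b) * u1 < 1 -> u0 <= u <= u1 ->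
  Jnorm b u <= Rmax (Jnorm b u0) (Jnorm b u1).
Proof.
  intros Hu0 Hku1 Hu.
  destruct (Rle_or_lt u 0) as [Hneg | Hpos].
  - apply (Rle_trans _ (Jnorm b u0)); [| apply Rmax_l].
    apply Jnorm_le; [lra | nra | unfold between0; lra].
  - apply (Rle_trans _ (Jnorm b u1)); [| apply Rmax_r].
    apply Jnorm_le; [lra | exact Hku1 | unfold between0; lra].
Qed.

End Jnorm_shape.

Definition beta_star (rho c : R) : R := c * rho / (1 - c * rho).
Definition u_m (rho c : R) : R := - (rho * (1 - c * rho) / (1 - c)).
Definition u_L (rho c : R) : R := rho * (1 - c * rho) / (1 + c).

Section Tuning.

Context {rho c : R} (Hrho : 0 < rho < 1) (Hc : 0 <= c <= 1 / 2).

Lemma c_rho_bounds :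
  0 <= c * rho <= c /\ c * rho <= rho / 2 /\ 0 <= c * rho ^ 2 <= c * rho /\ 0 < rho ^ 2 < rho.
Proof.
  assert (0 <= c * rho) by (apply Rmult_le_pos; lra).
  assert (0 <= c * rho * (1 - rho)) by (apply Rmult_le_pos; lra).
  repeat split; nra.
Qed.

Lemma kappa_eq m L :
  L / m * (1 - rho) * (1 - c * rho - c ^ 2 * (1 + rho))
    = (1 + rho) * (1 - c * rho - c ^ 2 * (1 - rho)) ->
  L / m = (1 + rho) * (1 - c) * (1 + c - c * rho) / ((1 - rho) * (1 + c) * (1 - c - c * rho)).
Proof.
  pose proof c_rho_bounds.
  replace (1 - c * rho - c ^ 2 * (1 + rho)) with ((1 + c) * (1 - c - c * rho)) by ring.
  replace (1 - c * rho - c ^ 2 * (1 - rho)) with ((1 - c) * (1 + c - c * rho)) by ring.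
  intro Hdef.
  apply (Rmult_eq_reg_r ((1 - rho) * (1 + c) * (1 - c - c * rho))).
  - replace (L / m * ((1 - rho) * (1 + c) * (1 - c - c * rho)))
      with (L / m * (1 - rho) * ((1 + c) * (1 - c - c * rho))) by ring.
    rewrite Hdef. field. repeat split; lra.
  - apply Rgt_not_eq, Rmult_lt_0_compat; [apply Rmult_lt_0_compat|]; lra.
Qed.

Lemma alpha_L_sub1 L alpha : 0 < L ->
  alpha = (1 + rho) * (1 + c - c * rho) / (L * (1 + c)) -> alpha * L - 1 = u_L rho c.
Proof. intros HL ->. unfold u_L. field. lra. Qed.

Lemma alpha_m_sub1 m L alpha : 0 < m -> 0 < L ->
  L / m * (1 - rho) * (1 - c * rho - c ^ 2 * (1 + rho))
    = (1 + rho) * (1 - c * rho - c ^ 2 * (1 - rho)) ->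
  alpha = (1 + rho) * (1 + c - c * rho) / (L * (1 + c)) -> alpha * m - 1 = u_m rho c.
Proof.
  pose proof c_rho_bounds. intros Hm HL Hdef ->.
  replace ((1 + rho) * (1 + c - c * rho) / (L * (1 + c)) * m)
    with ((1 + rho) * (1 + c - c * rho) / ((1 + c) * (L / m))) by (field; lra).
  rewrite (kappa_eq m L Hdef). unfold u_m. field. repeat split; lra.
Qed.

Lemma beta_eq L alpha beta : 0 < L ->
  alpha = (1 + rho) * (1 + c - c * rho) / (L * (1 + c)) ->
  beta = c * rho ^ 2 / ((alpha * L - 1) * (1 + c)) -> beta = beta_star rho c.
Proof.
  pose proof c_rho_bounds. intros HL Halpha ->.
  rewrite (alpha_L_sub1 L alpha HL Halpha). unfold u_L, beta_star. field. repeat split; lra.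
Qed.

Lemma beta_star_range : 0 <= beta_star rho c < 1.
Proof.
  pose proof c_rho_bounds. unfold beta_star. split.
  - apply Rmult_le_pos; [lra | left; apply Rinv_0_lt_compat; lra].
  - apply (Rmult_lt_reg_r (1 - c * rho)); [lra |]. field_simplify; lra.
Qed.

Lemma u_m_range : -1 < u_m rho c <= 0.
Proof.
  pose proof c_rho_bounds. unfold u_m.
  replace (- (rho * (1 - c * rho) / (1 - c)))
    with ((1 - rho) * (1 - c - c * rho) / (1 - c) - 1) by (field; lra).
  assert (0 < (1 - rho) * (1 - c - c * rho) / (1 - c)).
  { apply Rdiv_lt_0_compat; [apply Rmult_lt_0_compat|]; lra. }
  assert ((1 - rho) * (1 - c - c * rho) / (1 - c) <= 1).
  { apply (Rmult_le_reg_r (1 - c)); [lra |]. field_simplify; nra. }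
  lra.
Qed.

Lemma u_L_range : 0 <= u_L rho c /\ (1 + 2 * beta_star rho c) * u_L rho c < 1.
Proof.
  pose proof c_rho_bounds. unfold u_L, beta_star. split.
  - left. apply Rdiv_lt_0_compat; [apply Rmult_lt_0_compat|]; lra.
  - replace ((1 + 2 * (c * rho / (1 - c * rho))) * (rho * (1 - c * rho) / (1 + c)))
      with (rho * (1 + c * rho) / (1 + c)) by (field; lra).
    apply (Rmult_lt_reg_r (1 + c)); [lra |]. field_simplify; nra.
Qed.

Lemma Jnorm_u_L :
  Jnorm (beta_star rho c) (u_L rho c)
  = (1 + c) ^ 2 * (1 + c - c * rho ^ 2)
    / ((1 - rho ^ 2) * (1 + c - c * rho) * (1 + c + c * rho) * (1 + c + c * rho ^ 2)).
Proof.
  pose proof c_rho_bounds. unfold Jnorm, beta_star, u_L. field. repeat split; nra.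
Qed.

Lemma Jnorm_u_m :
  Jnorm (beta_star rho c) (u_m rho c)
  = (1 - c) ^ 2 * (1 - c + c * rho ^ 2)
    / ((1 - rho ^ 2) * (1 - c - c * rho) * (1 - c - c * rho ^ 2) * (1 - c + c * rho)).
Proof.
  pose proof c_rho_bounds. unfold Jnorm, beta_star, u_m. field. repeat split; nra.
Qed.

Lemma Jnorm_u_L_le_u_m :
  Jnorm (beta_star rho c) (u_L rho c) <= Jnorm (beta_star rho c) (u_m rho c).
Proof.
  pose proof c_rho_bounds.
  rewrite Jnorm_u_L, Jnorm_u_m.
  apply Rdiv_le_cross; [repeat apply Rmult_lt_0_compat; lra.. |].
  assert (0 < 1 - c ^ 2 - c ^ 2 * rho ^ 2 * (1 + c ^ 2 - c ^ 2 * rho ^ 2)).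
  { assert (c ^ 2 <= 1 / 4) by nra.
    assert (0 <= c ^ 2 * rho ^ 2 <= c ^ 2) by (split; nra).
    nra. }
  assert (0 <= (1 - rho ^ 2) * (4 * c * rho ^ 2)) by (apply Rmult_le_pos; nra).
  match goal with |- ?l <= ?r =>
    replace r with (l + (1 - rho ^ 2) * (4 * c * rho ^ 2)
                          * (1 - c ^ 2 - c ^ 2 * rho ^ 2 * (1 + c ^ 2 - c ^ 2 * rho ^ 2)))
      by ring end.
  nra.
Qed.

Lemma Jnorm_tuned_bounds u : u_m rho c <= u <= u_L rho c ->
  1 <= Jnorm (beta_star rho c) u <= Jnorm (beta_star rho c) (u_m rho c).
Proof.
  intro Hu.
  pose proof beta_star_range as Hb. pose proof u_m_range. pose proof u_L_range.
  split.
  - apply Jnorm_ge1; [exact Hb | lra |].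
    assert (0 <= 1 + 2 * beta_star rho c) by lra. nra.
  - rewrite <- (Rmax_left _ _ Jnorm_u_L_le_u_m).
    apply Jnorm_le_Rmax; [exact Hb | lra | tauto | exact Hu].
Qed.

Lemma r_range :
  1 <= (1 + c) * (1 - c + c * rho) / ((1 - c) * (1 + c - c * rho)) <= 3.
Proof.
  pose proof c_rho_bounds.
  assert (0 < (1 - c) * (1 + c - c * rho)) by (apply Rmult_lt_0_compat; lra).
  split.
  - apply (Rmult_le_reg_r ((1 - c) * (1 + c - c * rho))); [lra |]. field_simplify; nra.
  - apply (Rmult_le_reg_r ((1 - c) * (1 + c - c * rho))); [lra |]. field_simplify; nra.
Qed.

End Tuning.

Theorem lemma6 (m L rho c sigma_w alpha beta gamma : R) :
  0 < m -> m <= L ->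
  0 < rho < 1 ->
  sqrt (3 * (L / m) + 1) / 2 <= 1 / (1 - rho) <= (L / m + 1) / 2 ->
  0 <= c <= 1 / 2 ->
  (L / m) * (1 - rho) * (1 - c * rho - c ^ 2 * (1 + rho))
    = (1 + rho) * (1 - c * rho - c ^ 2 * (1 - rho)) ->
  0 <= sigma_w ->
  alpha = (1 + rho) * (1 + c - c * rho) / (L * (1 + c)) ->
  beta = c * rho ^ 2 / ((alpha * L - 1) * (1 + c)) ->
  gamma = beta ->
  let kappa := L / m in
  let r := (1 + c) * (1 - c + c * rho) / ((1 - c) * (1 + c - c * rho)) in
  let J := Jhat alpha beta gamma sigma_w in
  (* hat J_max = hat J(m) *)
  (forall lam, m <= lam <= L -> J lam <= J m) /\
  J m = sigma_w ^ 2 * (1 - c) ^ 2 * (r * kappa + 1)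
        / (2 * (1 - c - c * rho ^ 2) * (1 + rho) * (1 - c + c * rho)) /\
  J L <= J m /\
  J L = sigma_w ^ 2 * (1 + c) ^ 2 * (1 + c - c * rho ^ 2)
        / ((1 - rho ^ 2) * (1 + c - c * rho) * (1 + c + c * rho)
           * (1 + c + c * rho ^ 2)) /\
  (* hat J_min = hat J(1/alpha) = sigma_w^2, with 1/alpha in [m, L] *)
  m <= 1 / alpha <= L /\
  (forall lam, m <= lam <= L -> J (1 / alpha) <= J lam) /\
  J (1 / alpha) = sigma_w ^ 2 /\
  1 <= r <= 3.
Proof.
  (* The bound on 1 / (1 - rho) only guarantees that such a c exists. *)
  intros Hm HmL Hrho _ Hc Hdef Hsigma Halpha Hbeta -> kappa r J.
  assert (HL : 0 < L) by lra.
  pose proof (alpha_L_sub1 Hrho Hc L alpha HL Halpha) as HuL.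
  pose proof (alpha_m_sub1 Hrho Hc m L alpha Hm HL Hdef Halpha) as Hum.
  pose proof (u_m_range Hrho Hc). pose proof (u_L_range Hrho Hc).
  assert (Halpha_pos : 0 < alpha) by nra.
  assert (HJ : forall lam, J lam = sigma_w ^ 2 * Jnorm (beta_star rho c) (alpha * lam - 1)).
  { intro lam. unfold J. rewrite (beta_eq Hrho Hc L alpha beta HL Halpha Hbeta).
    apply Jhat_eq_Jnorm. }
  assert (HJbounds : forall lam, m <= lam <= L -> sigma_w ^ 2 <= J lam <= J m).
  { intros lam Hlam. rewrite !HJ, Hum.
    assert (Hu : u_m rho c <= alpha * lam - 1 <= u_L rho c)
      by (rewrite <- Hum, <- HuL; split; nra).
    destruct (Jnorm_tuned_bounds Hrho Hc _ Hu).
    split; [rewrite <- (Rmult_1_r (sigma_w ^ 2)) at 1 |];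
      apply Rmult_le_compat_l; auto using pow2_ge_0. }
  assert (HJinv : J (1 / alpha) = sigma_w ^ 2).
  { rewrite HJ. replace (alpha * (1 / alpha) - 1) with 0 by (field; lra).
    rewrite Jnorm_0. ring. }
  repeat split.
  - intros lam Hlam. apply HJbounds, Hlam.
  - rewrite HJ, Hum, Jnorm_u_m by assumption. unfold r, kappa.
    rewrite (kappa_eq Hrho Hc m L Hdef). field. repeat split; nra.
  - apply HJbounds. lra.
  - rewrite HJ, HuL, Jnorm_u_L by assumption. field. repeat split; nra.
  - apply (Rmult_le_reg_l alpha); [lra |]. field_simplify; lra.
  - apply (Rmult_le_reg_l alpha); [lra |]. field_simplify; lra.
  - intros lam Hlam. rewrite HJinv. apply HJbounds, Hlam.
  - exact HJinv.
  - apply (r_range Hrho Hc).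
  - apply (r_range Hrho Hc).
Qed.
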